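(* Let $\Delta>0$ and $B\ge0$. Suppose outcomes are observed under a balanced $K$-cluster randomized design $\mathcal{D}(\mathcal{C})$ and the potential outcomes have the form $Y_i(\mathbf{Z})=g_i(Z_i,e_i(\mathbf{Z}))$ where for all $i$, all $Z\in\{-1,1\}$ and all $e\in[-1,1]$: $|g_i(Z,e)-g_i(Z,Z)|=0$ if $|Z-e|<\Delta$, and $|g_i(Z,e)-g_i(Z,Z)|\le B$ otherwise. Then $$\left|\mathbb{E}[\widehat\tau_{DIM}]-\tau^*\right|\le\frac{2B}{N\Delta}\cdot\frac{K}{K-1}\,\mathcal{H}(\mathcal{C}),$$ where $\tau^*=\frac1N\sum_i\big(g_i(1,1)-g_i(-1,-1)\big)$.
   Context: Setting: $N$ experimental units $[N]$, $M$ interference units $[M]$, weights $w_{is}\ge0$ with $\sum_s w_{is}>0$ for all $i$ and $\sum_i w_{is}>0$ for all $s$. For $\mathbf{Z}\in\{-1,1\}^N$: dose $d_s=\frac{\sum_i w_{is}Z_i}{\sum_i w_{is}}$, exposure $e_i(\mathbf{Z})=\frac{\sum_s w_{is}d_s}{\sum_s w_{is}}\in[-1,1]$. Balanced $K$-cluster randomized design $\mathcal{D}(\mathcal{C})$: $K\ge2$ divides $N$, $\mathcal{C}$ partitions $[N]$ into $K$ clusters of size $N/K$, $\mathcal{C}(i)$ is the cluster of $i$; $K_T$ clusters ($0<K_T<K$) chosen uniformly at random are treated ($Z_i=1$), the rest are control ($Z_i=-1$). $N_T=NK_T/K$, $N_C=N-N_T$; $\widehat\tau_{DIM}=\frac{1}{N_T}\sum_{i:Z_i=1}Y_i-\frac{1}{N_C}\sum_{i:Z_i=-1}Y_i$.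 $\mathcal{H}(\mathcal{C})=\sum_{i\in[N]}\sum_{j\in[N]\setminus\mathcal{C}(i)}\sum_{s\in[M]}\frac{w_{is}}{\sum_{s'} w_{is'}}\frac{w_{js}}{\sum_{k} w_{ks}}$. *)

From HB Require Import structures.
From mathcomp Require Import all_boot all_order all_algebra.
From mathcomp Require Import reals.
Set Implicit Arguments. Unset Strict Implicit. Unset Printing Implicit Defensive.
Import Order.TTheory GRing.Theory Num.Theory.
Local Open Scope ring_scope.

Section Defs.
Variables (R : realType) (N M K : nat).
Variable w : 'I_N -> 'I_M -> R.
Variable c : 'I_N -> 'I_K.

Definition dose (Z : 'I_N -> R) (s : 'I_M) : R :=
  (\sum_(i < N) w i s * Z i) / (\sum_(i < N) w i s).

Definition exposure (Z : 'I_N -> R) (i : 'I_N) : R :=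
  (\sum_(s < M) w i s * dose Z s) / (\sum_(s < M) w i s).

Definition Zof (T : {set 'I_K}) (i : 'I_N) : R := if c i \in T then 1 else -1.

Definition Yobs (g : 'I_N -> R -> R -> R) (Z : 'I_N -> R) (i : 'I_N) : R :=
  g i (Z i) (exposure Z i).

Definition tauDIM (KT : nat) (g : 'I_N -> R -> R -> R) (T : {set 'I_K}) : R :=
  let Z := Zof T in
  let NT := N%:R * KT%:R / K%:R in
  let NC := N%:R - NT in
  (\sum_(i < N | Z i == 1) Yobs g Z i) / NT
  - (\sum_(i < N | Z i == -1) Yobs g Z i) / NC.

(* expectation over the balanced K-cluster design: K_T clusters chosen
   uniformly at random among all subsets of size K_T *)
Definition designE (KT : nat) (f : {set 'I_K} -> R) : R :=
  (\sum_(T : {set 'I_K} | #|T| == KT) f T) / #|[set T : {set 'I_K} | #|T| == KT]|%:R.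

Definition tau_star (g : 'I_N -> R -> R -> R) : R :=
  N%:R^-1 * \sum_(i < N) (g i 1 1 - g i (-1) (-1)).

Definition Hcal : R :=
  \sum_(i < N) \sum_(j < N | c j != c i) \sum_(s < M)
     (w i s / (\sum_(s' < M) w i s')) * (w j s / (\sum_(k < N) w k s)).
End Defs.

From mathcomp Require Import all_boot all_order all_algebra all_fingroup.
From mathcomp Require Import reals ring lra.
Set Implicit Arguments. Unset Strict Implicit. Unset Printing Implicit Defensive.
Import Order.TTheory GRing.Theory Num.Theory.
Local Open Scope ring_scope.

(* The bias of the difference-in-means estimator splits unit by unit into the
   design expectations of 1{Z_i = z} (Y_i - g_i(z, z)), z = 1, -1, weighted by
   K / K_T and K / (K - K_T).  Under the threshold model
   |g_i(z, e) - g_i(z, z)| <= (B / Delta) |z - e|, and as e_i is an average of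
   the Z_j with weights sum_s w_is w_js / (sum w_i. * sum w_.s), the quantity
   |z - e_i| = 1 - z e_i is twice the weight carried by the units j on the
   other side than z.  Units of one cluster are never split, while units of
   distinct clusters are split with i on side z with probability
   K_T (K - K_T) / (K (K - 1)); both sides together give the factor
   K / (K - 1) in front of H(C). *)

Lemma sumr_mem_card (R : pzSemiRingType) (I : finType) (A : {pred I}) :
  \sum_(i : I) ((i \in A)%:R : R) = #|A|%:R.
Proof.
rewrite -sum1_card natr_sum [RHS]big_mkcond /=.
by apply: eq_bigr => i _; case: (i \in A).
Qed.

Section UniformDesign.
Variables (R : realType) (K KT : nat).
Hypothesis KT_le_K : (KT <= K)%N.

Local Notation E := (@designE R K KT).

Lemma eq_designE (F G : {set 'I_K} -> R) :
  (forall T : {set 'I_K}, #|T| = KT -> F T = G T) -> E F = E G.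
Proof. by move=> FG; rewrite /designE (eq_bigr G) // => T /eqP; apply: FG. Qed.

Lemma designE_sum (I : Type) (r : seq I) (P : pred I) (F : I -> {set 'I_K} -> R) :
  E (fun T => \sum_(i <- r | P i) F i T) = \sum_(i <- r | P i) E (F i).
Proof. by rewrite /designE exchange_big mulr_suml. Qed.

Lemma designEB (F G : {set 'I_K} -> R) :
  E (fun T => F T - G T) = E F - E G.
Proof. by rewrite /designE sumrB mulrBl. Qed.

Lemma designEMl (a : R) (F : {set 'I_K} -> R) :
  E (fun T => a * F T) = a * E F.
Proof. by rewrite /designE -mulr_sumr mulrA. Qed.

Lemma designE_cst (a : R) : E (fun _ => a) = a.
Proof.
have draws_gt0 : (0 < #|[set T : {set 'I_K} | #|T| == KT]|)%N.
  by rewrite card_draws card_ord bin_gt0.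
rewrite /designE sumr_const !cardsE -[a *+ _]mulr_natr mulfK //.
by rewrite pnatr_eq0 -lt0n -cardsE.
Qed.

Lemma ler_designE (F G : {set 'I_K} -> R) :
  (forall T, F T <= G T) -> E F <= E G.
Proof. by move=> FG; apply: ler_wpM2r; [rewrite invr_ge0 | apply: ler_sum]. Qed.

Lemma ler_norm_designE (F : {set 'I_K} -> R) :
  `|E F| <= E (fun T => `|F T|).
Proof.
rewrite /designE normrM [`|_^-1|]ger0_norm ?invr_ge0 //.
by rewrite ler_wpM2r ?invr_ge0 ?ler_norm_sum.
Qed.

Lemma designE_perm (s : {perm 'I_K}) (F : {set 'I_K} -> R) :
  E F = E (fun T => F (s @: T)).
Proof.
rewrite /designE (reindex_inj (imset_inj (@perm_inj _ s))) /=; congr (_ / _).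
by apply: eq_bigl => T; rewrite card_imset //; apply: perm_inj.
Qed.

Lemma designE_mem2_perm (s : {perm 'I_K}) (k l : 'I_K) (F : bool -> bool -> R) :
  E (fun T => F (s k \in T) (s l \in T)) = E (fun T => F (k \in T) (l \in T)).
Proof.
rewrite (designE_perm s); apply: eq_designE => T _.
by rewrite !mem_imset //; apply: perm_inj.
Qed.

Lemma designE_mem (k : 'I_K) : E (fun T => (k \in T)%:R) = KT%:R / K%:R.
Proof.
have K_gt0 : (0 < K)%N by case: (K) k => [[]|].
(* The K marginals agree by symmetry and add up to K_T. *)
suff: K%:R * E (fun T => (k \in T)%:R) = KT%:R.
  by move=> <-; rewrite [_ * E _]mulrC mulfK // pnatr_eq0 -lt0n.
transitivity (\sum_(l < K) E (fun T => (l \in T)%:R)).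
  rewrite (eq_bigr (fun _ => E (fun T => (k \in T)%:R))).
    by rewrite sumr_const card_ord mulr_natl.
  move=> l _; have := designE_mem2_perm (tperm k l) k k (fun b _ => b%:R).
  by rewrite tpermL.
rewrite -designE_sum -[RHS]designE_cst; apply: eq_designE => T <-.
exact: sumr_mem_card.
Qed.

Lemma designE_mem_notin (k l : 'I_K) :
  E (fun T => (k \in T)%:R * (l \notin T)%:R) =
  if k == l then 0 else (K%:R - KT%:R) * KT%:R / ((K%:R - 1) * K%:R).
Proof.
pose P l' := E (fun T => (k \in T)%:R * (l' \notin T)%:R).
have P_kk : P k = 0.
  rewrite -(designE_cst 0); apply: eq_designE => T _.
  by case: (k \in T); rewrite ?mulr0 ?mul0r.
case: eqP => [<- // | /eqP kl].
have K_gt1 : (1 < K)%N.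
  by rewrite -(card_ord K) (leq_trans _ (max_card [set k; l])) // cards2 kl.
have P_l : forall l', l' != k -> P l' = P l.
  move=> l' l'k; have := designE_mem2_perm (tperm l l') k l
    (fun b b' => b%:R * (~~ b')%:R).
  by rewrite tpermL tpermD // eq_sym.
have K1_neq0 : (K%:R : R) - 1 != 0 by rewrite subr_eq0 pnatr_eq1 gtn_eqF.
have K_neq0 : (K%:R : R) != 0 by rewrite pnatr_eq0 gtn_eqF // ltnW.
(* Summing over l', the term l' = k vanishes and the others equal P l by a
   transposition fixing k; the sum itself is (K - K_T) E[k \in T]. *)
suff PlE : (K%:R - 1) * P l = (K%:R - KT%:R) * (KT%:R / K%:R).
  by apply: (mulfI K1_neq0); rewrite PlE; field; rewrite K1_neq0 K_neq0.
transitivity (\sum_(l' < K) P l').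
  rewrite (bigD1 k) //= P_kk add0r (eq_bigr (fun _ => P l)); last exact: P_l.
  by rewrite sumr_const -[P l *+ _]mulr_natl cardC1 card_ord -subn1 natrB // ltnW.
rewrite -(designE_mem k) -designEMl -designE_sum; apply: eq_designE => T cardT.
rewrite -mulr_sumr mulrC; congr (_ * _).
rewrite (eq_bigr (fun l' => (l' \in ~: T)%:R)) => [|l' _]; last by rewrite in_setC.
by rewrite sumr_mem_card cardsCs setCK card_ord cardT natrB.
Qed.

End UniformDesign.

Lemma oneBmul_wavg (R : fieldType) (I : finType) (a x : I -> R) (t : R) :
  \sum_k a k != 0 ->
  1 - t * ((\sum_k a k * x k) / \sum_k a k) =
  \sum_k (a k / \sum_k a k) * (1 - t * x k).
Proof.
move=> a_neq0; rewrite [RHS](eq_bigr (fun k => a k / \sum_k a k -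
   t * (a k * x k) / \sum_k a k)) => [|k _]; last by ring.
by rewrite sumrB -mulr_suml divff // -mulr_suml -mulr_sumr mulrA.
Qed.

Section Exposure.
Variables (R : realType) (N M : nat) (w : 'I_N -> 'I_M -> R).
Hypothesis w_ge0 : forall i s, 0 <= w i s.
Hypothesis unit_mass_gt0 : forall i, 0 < \sum_(s < M) w i s.
Hypothesis site_mass_gt0 : forall s, 0 < \sum_(i < N) w i s.

Definition exposure_weight (i j : 'I_N) (s : 'I_M) : R :=
  (w i s / (\sum_(s' < M) w i s')) * (w j s / (\sum_(k < N) w k s)).

Lemma exposure_weight_ge0 i j s : 0 <= exposure_weight i j s.
Proof. by rewrite mulr_ge0 // divr_ge0 // ltW. Qed.

Lemma oneBmul_exposure (Z : 'I_N -> R) i t :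
  1 - t * exposure w Z i =
  \sum_(j < N) \sum_(s < M) exposure_weight i j s * (1 - t * Z j).
Proof.
rewrite /exposure oneBmul_wavg ?gt_eqF // exchange_big /=.
apply: eq_bigr => s _; rewrite /dose oneBmul_wavg ?gt_eqF // mulr_sumr.
by apply: eq_bigr => j _; rewrite mulrA.
Qed.

Lemma exposure_in_range (Z : 'I_N -> R) i :
  (forall j, -1 <= Z j <= 1) -> -1 <= exposure w Z i <= 1.
Proof.
move=> Z_range.
have oneBmul_ge0 t : -1 <= t <= 1 -> 0 <= 1 - t * exposure w Z i.
  move=> /andP[t_ge t_le]; rewrite oneBmul_exposure.
  apply: sumr_ge0 => j _; apply: sumr_ge0 => s _.
  rewrite mulr_ge0 ?exposure_weight_ge0 //.
  have /andP[Zj_ge Zj_le] := Z_range j; nra.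
have /oneBmul_ge0 e_le1 : -1 <= (1 : R) <= 1 by apply/andP; split; lra.
have /oneBmul_ge0 e_geN1 : -1 <= (-1 : R) <= 1 by apply/andP; split; lra.
by apply/andP; split; lra.
Qed.
End Exposure.

Lemma threshold_dev_le (R : realType) (N : nat) (g : 'I_N -> R -> R -> R)
    (Delta B : R) i z e :
  0 < Delta -> 0 <= B ->
  (`|z - e| < Delta -> `|g i z e - g i z z| = 0) ->
  (Delta <= `|z - e| -> `|g i z e - g i z z| <= B) ->
  `|g i z e - g i z z| <= B / Delta * `|z - e|.
Proof.
move=> Delta_gt0 B_ge0 near far.
have BD_ge0 : 0 <= B / Delta by rewrite divr_ge0 // ltW.
case: (ltrP `|z - e| Delta) => [/near -> | /[dup] /far dev_le].
  by rewrite mulr_ge0.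
by move=> /(ler_wpM2l BD_ge0); rewrite divfK ?gt_eqF //; apply: le_trans.
Qed.

Lemma norm_sign_sub (R : realDomainType) (z e : R) :
  (z = 1 \/ z = -1) -> -1 <= e <= 1 -> `|z - e| = 1 - z * e.
Proof.
by move=> [] -> /andP[e_ge e_le]; [rewrite ger0_norm | rewrite ler0_norm]; lra.
Qed.

Lemma ler_norm_subMM (R : realDomainType) (a b x y X : R) :
  0 <= a -> 0 <= b -> `|x| <= X -> `|y| <= X -> `|a * x - b * y| <= (a + b) * X.
Proof.
move=> a_ge0 b_ge0 x_le y_le; apply: le_trans (ler_normB _ _) _.
by rewrite !normrM (ger0_norm a_ge0) (ger0_norm b_ge0) mulrDl lerD // ler_wpM2l.
Qed.

Section ClusterDesign.
Variables (R : realType) (N M K KT : nat).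
Variables (w : 'I_N -> 'I_M -> R) (c : 'I_N -> 'I_K) (g : 'I_N -> R -> R -> R).
Variables (Delta B : R).
Hypothesis w_ge0 : forall i s, 0 <= w i s.
Hypothesis unit_mass_gt0 : forall i, 0 < \sum_(s < M) w i s.
Hypothesis site_mass_gt0 : forall s, 0 < \sum_(i < N) w i s.
Hypothesis KT_gt0 : (0 < KT)%N.
Hypothesis KT_lt_K : (KT < K)%N.
Hypothesis Delta_gt0 : 0 < Delta.
Hypothesis B_ge0 : 0 <= B.
Hypothesis g_threshold : forall (i : 'I_N) (z e : R),
  (z = 1 \/ z = -1) -> -1 <= e <= 1 ->
  (`|z - e| < Delta -> `|g i z e - g i z z| = 0) /\
  (Delta <= `|z - e| -> `|g i z e - g i z z| <= B).

Local Notation Z T := (Zof R c T).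

Lemma Zof_sign T i : Z T i = 1 \/ Z T i = -1.
Proof. by rewrite /Zof; case: (c i \in T); [left | right]. Qed.

Lemma Zof_in_range T i : -1 <= Z T i <= 1.
Proof. by case: (Zof_sign T i) => ->; apply/andP; split; lra. Qed.

Lemma Zof_eq1 T i : (Z T i == 1) = (c i \in T).
Proof.
have N1_neq1 : (-1 : R) != 1 by apply/eqP; lra.
by rewrite /Zof; case: (c i \in T); rewrite ?eqxx ?(negbTE N1_neq1).
Qed.

Lemma Zof_eqN1 T i : (Z T i == -1) = (c i \notin T).
Proof.
have N1_neq1 : (1 : R) != -1 by apply/eqP; lra.
by rewrite /Zof; case: (c i \in T); rewrite ?eqxx ?(negbTE N1_neq1).
Qed.

Let q : R := (K%:R - KT%:R) * KT%:R / ((K%:R - 1) * K%:R).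

Lemma designE_Zof_disagree i j z : z = 1 \/ z = -1 ->
  designE KT (fun T => (Z T i == z)%:R * (1 - z * Z T j)) =
  if c i == c j then 0 else 2 * q.
Proof.
have KT_le_K := ltnW KT_lt_K.
case=> ->.
- rewrite (eq_designE (G := fun T => 2 * ((c i \in T)%:R * (c j \notin T)%:R))).
    by rewrite designEMl designE_mem_notin //; case: eqP; rewrite ?mulr0.
  by move=> T _; rewrite Zof_eq1 /Zof; case: (c i \in T); case: (c j \in T) => /=; lra.
- rewrite (eq_designE (G := fun T => 2 * ((c j \in T)%:R * (c i \notin T)%:R))).
    by rewrite designEMl designE_mem_notin // eq_sym; case: eqP; rewrite ?mulr0.
  by move=> T _; rewrite Zof_eqN1 /Zof; case: (c i \in T); case: (c j \in T) => /=; lra.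
Qed.

Definition unit_dev (i : 'I_N) (z : R) (T : {set 'I_K}) : R :=
  (Z T i == z)%:R * (Yobs w g (Z T) i - g i z z).

Definition cross_cluster_weight (i : 'I_N) : R :=
  \sum_(j < N | c j != c i) \sum_(s < M) exposure_weight w i j s.

Lemma designE_exposure_mismatch i z : z = 1 \/ z = -1 ->
  designE KT (fun T => (Z T i == z)%:R * (1 - z * exposure w (Z T) i)) =
  2 * q * cross_cluster_weight i.
Proof.
move=> z_sign.
pose mismatch j T := (Z T i == z)%:R * (1 - z * Z T j).
rewrite (eq_designE (G := fun T => \sum_(j < N) \sum_(s < M)
    exposure_weight w i j s * mismatch j T)); last first.
  move=> T _; rewrite oneBmul_exposure // mulr_sumr; apply: eq_bigr => j _.
  by rewrite mulr_sumr; apply: eq_bigr => s _; rewrite mulrCA.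
rewrite designE_sum /cross_cluster_weight mulr_sumr [RHS]big_mkcond /=.
apply: eq_bigr => j _; rewrite designE_sum eq_sym.
rewrite (eq_bigr (fun s => exposure_weight w i j s * (if c i == c j then 0 else 2 * q)))
  => [|s _]; last by rewrite designEMl designE_Zof_disagree.
case: eqP => _; first by rewrite big1 // => s _; rewrite mulr0.
by rewrite mulr_sumr; apply: eq_bigr => s _; rewrite mulrC.
Qed.

Lemma norm_designE_unit_dev_le i z : z = 1 \/ z = -1 ->
  `|designE KT (unit_dev i z)| <= B / Delta * (2 * q * cross_cluster_weight i).
Proof.
move=> z_sign; apply: le_trans (ler_norm_designE _ _) _.
have unit_dev_le T : `|unit_dev i z T| <=
    B / Delta * ((Z T i == z)%:R * (1 - z * exposure w (Z T) i)).
  rewrite /unit_dev /Yobs normrM; case: eqP => [Zi_z | _]; last first.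
    by rewrite normr0 !mul0r mulr0.
  have e_range : -1 <= exposure w (Z T) i <= 1.
    by apply: exposure_in_range => // j; apply: Zof_in_range.
  have [near far] := g_threshold i z_sign e_range.
  rewrite Zi_z normr1 !mul1r -norm_sign_sub //.
  exact: threshold_dev_le.
apply: le_trans (ler_designE _ unit_dev_le) _.
by rewrite designEMl designE_exposure_mismatch.
Qed.

Hypothesis N_gt0 : (0 < N)%N.

Lemma designE_tauDIM_sub_tau_star :
  designE KT (tauDIM w c KT g) - tau_star g =
  \sum_(i < N) N%:R^-1 * (K%:R / KT%:R * designE KT (unit_dev i 1)
                          - K%:R / (K%:R - KT%:R) * designE KT (unit_dev i (-1))).
Proof.
have KT_le_K := ltnW KT_lt_K.
pose NT : R := N%:R * KT%:R / K%:R.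
pose NC : R := N%:R - NT.
have tauDIME T : tauDIM w c KT g T = \sum_(i < N)
    (NT^-1 * ((Z T i == 1)%:R * Yobs w g (Z T) i)
     - NC^-1 * ((Z T i == -1)%:R * Yobs w g (Z T) i)).
  rewrite /tauDIM /= -/NT -/NC !(big_mkcond (fun i => Z T i == _)) /=.
  rewrite !mulr_suml -sumrB; apply: eq_bigr => i _.
  by congr (_ - _); rewrite mulrC; case: eqP; rewrite ?mul1r ?mul0r.
rewrite (eq_designE (fun T _ => tauDIME T)).
rewrite designE_sum /tau_star mulr_sumr -sumrB; apply: eq_bigr => i _.
have devE z : designE KT (unit_dev i z) =
    designE KT (fun T => (Z T i == z)%:R * Yobs w g (Z T) i)
    - g i z z * designE KT (fun T => (Z T i == z)%:R).
  by rewrite -designEMl -designEB; apply: eq_designE => T _; rewrite /unit_dev; ring.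
have treatedE : designE KT (fun T => (Z T i == 1)%:R) = KT%:R / K%:R :> R.
  rewrite -(designE_mem _ KT_le_K (c i)); apply: eq_designE => T _.
  by rewrite Zof_eq1.
have controlE : designE KT (fun T => (Z T i == -1)%:R) = 1 - KT%:R / K%:R :> R.
  rewrite (eq_designE (G := fun T => 1 - (c i \in T)%:R)) => [|T _].
    by rewrite designEB designE_cst // designE_mem.
  by rewrite Zof_eqN1; case: (_ \in _); rewrite ?subrr ?subr0.
have K_neq0 : (K%:R : R) != 0 by rewrite pnatr_eq0 -lt0n (leq_trans KT_gt0).
have N_neq0 : (N%:R : R) != 0 by rewrite pnatr_eq0 -lt0n.
have KT_neq0 : (KT%:R : R) != 0 by rewrite pnatr_eq0 -lt0n.
have KKT_neq0 : (K%:R : R) - KT%:R != 0 by rewrite subr_eq0 eqr_nat gtn_eqF.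
rewrite designEB !designEMl !devE treatedE controlE /NC /NT.
by field; rewrite K_neq0 KKT_neq0 KT_neq0 N_neq0 -mulrBr mulf_neq0.
Qed.

Lemma norm_unit_bias_le i :
  `|N%:R^-1 * (K%:R / KT%:R * designE KT (unit_dev i 1)
               - K%:R / (K%:R - KT%:R) * designE KT (unit_dev i (-1)))|
  <= 2 * B / (N%:R * Delta) * (K%:R / (K%:R - 1)) * cross_cluster_weight i.
Proof.
have KKT_gt0 : 0 < (K%:R : R) - KT%:R by rewrite subr_gt0 ltr_nat.
have dev_le z := norm_designE_unit_dev_le i (z := z).
rewrite normrM ger0_norm ?invr_ge0 //.
apply: le_trans (ler_wpM2l _ (ler_norm_subMM _ _ (dev_le 1 _) (dev_le (-1) _))) _;
  rewrite ?invr_ge0 ?divr_ge0 ?(ltW KKT_gt0) //; [by left | by right |].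
have K_gt1 : (1 < K)%N := leq_ltn_trans KT_gt0 KT_lt_K.
have K_neq0 : (K%:R : R) != 0 by rewrite pnatr_eq0 gtn_eqF // ltnW.
have K1_neq0 : (K%:R : R) - 1 != 0 by rewrite subr_eq0 pnatr_eq1 gtn_eqF.
have N_neq0 : (N%:R : R) != 0 by rewrite pnatr_eq0 -lt0n.
have KT_neq0 : (KT%:R : R) != 0 by rewrite pnatr_eq0 -lt0n.
rewrite le_eqVlt; apply/orP; left; apply/eqP; rewrite /q; field.
by rewrite K_neq0 K1_neq0 N_neq0 KT_neq0 (gt_eqF KKT_gt0) (gt_eqF Delta_gt0).
Qed.

End ClusterDesign.

Theorem lemma4 (R : realType) (N M K KT : nat)
  (w : 'I_N -> 'I_M -> R) (c : 'I_N -> 'I_K)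
  (g : 'I_N -> R -> R -> R) (Delta B : R) :
  (forall i s, 0 <= w i s) ->
  (forall i, 0 < \sum_(s < M) w i s) ->
  (forall s, 0 < \sum_(i < N) w i s) ->
  (2 <= K)%N -> (0 < N)%N -> (K %| N)%N ->
  (forall k : 'I_K, #|[set i | c i == k]| = (N %/ K)%N) ->
  (0 < KT)%N -> (KT < K)%N ->
  0 < Delta -> 0 <= B ->
  (forall (i : 'I_N) (z e : R), (z = 1 \/ z = -1) -> -1 <= e <= 1 ->
     (`|z - e| < Delta -> `|g i z e - g i z z| = 0) /\
     (Delta <= `|z - e| -> `|g i z e - g i z z| <= B)) ->
  `|designE KT (tauDIM w c KT g) - tau_star g|
    <= (2 * B) / (N%:R * Delta) * (K%:R / (K%:R - 1)) * Hcal w c.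
Proof.
move=> w_ge0 unit_gt0 site_gt0 _ N_gt0 _ _ KT_gt0 KT_lt_K Delta_gt0 B_ge0 g_thr.
rewrite designE_tauDIM_sub_tau_star //.
apply: le_trans (ler_norm_sum _ _ _) _; rewrite /Hcal mulr_sumr.
apply: ler_sum => i _.
exact: norm_unit_bias_le.
Qed.
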